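(* Let $g$ be a $C^1$ function near $0$ in $\mathbb{R}$ with $g(0)=0$, $g'(0)>0$, and let $V(x)=\int_0^x g(s)\,ds$. Let $J\ni 0$ be an open interval such that $V$ is strictly increasing on $J\cap(0,\infty)$, strictly decreasing on $J\cap(-\infty,0)$, and for each $x\in J$ there is a unique $h(x)\in J$ with $V(h(x))=V(x)$ and $\operatorname{sgn}h(x)=-\operatorname{sgn}x$. Fix $x_0\in J$ with $x_0>0$, let $t\mapsto X(t,x_0)$ be the (periodic) solution of $\ddot x=-g(x)$ with $X(0,x_0)=x_0$, $\partial_tX(0,x_0)=0$, and let $\mathcal T(x_0)$ be its period. Consider the $\mathcal T(x_0)$-periodic linear equation \[ \ddot y=-g'\big(X(t,x_0)\big)\,y . \] Then either all solutions of this equation are $\mathcal T(x_0)$-periodic, or all its solutions are unbounded except those proportional to $t\mapsto\partial_tX(t,x_0)$. A necessary and sufficient condition for the former case is $\mathcal T'(x_0)=0$.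
   Context: $\mathcal T$ is $C^1$ on $\{x_0\in J:x_0>0\}$, so $\mathcal T'(x_0)$ is defined. *)

From Stdlib Require Import Reals Lra.
From Coquelicot Require Import Coquelicot.
Open Scope R_scope.

Definition sgn (x : R) : R :=
  if Rlt_dec 0 x then 1 else if Rlt_dec x 0 then -1 else 0.

Definition in_interval (a b : Rbar) (x : R) : Prop := Rbar_lt a x /\ Rbar_lt x b.

Definition potential (g : R -> R) (x : R) : R := RInt g 0 x.

Definition solves_ivp (g : R -> R) (x0 : R) (f : R -> R) : Prop :=
  exists df : R -> R,
    (forall t, is_derive f t (df t) /\ is_derive df t (- g (f t))) /\
    f 0 = x0 /\ df 0 = 0.

Definition periodic (f : R -> R) (T : R) : Prop := forall t, f (t + T) = f t.

Definition is_min_period (f : R -> R) (T : R) : Prop :=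
  0 < T /\ periodic f T /\ (forall T', 0 < T' -> periodic f T' -> T <= T').

Definition lin_sol (q : R -> R) (y : R -> R) : Prop :=
  exists dy : R -> R,
    forall t, is_derive y t (dy t) /\ is_derive dy t (- q t * y t).

Definition unbounded (y : R -> R) : Prop :=
  ~ (exists M, forall t, Rabs (y t) <= M).

(* The velocity [Xdot] of the orbit solves the linearized equation, and
   variation of constants gives a second solution [u] with [u(0) = 1],
   [u'(0) = 0], normalized by its Wronskian with [Xdot].  Since the coefficient
   is [T]-periodic, uniqueness yields the monodromy [u(t + T) = u(t) + c Xdot(t)],
   hence [y(t + T) = y(t) + c y(0) Xdot(t)] for every solution: if [c = 0] all
   solutions are periodic, otherwise those with [y(0) <> 0] drift linearly along
   [t + n T], while multiples of [Xdot] stay bounded.  Differentiating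
   [Xdot(T(x), x) = 0] in the amplitude [x] identifies [c = -T'(x0)]; the
   differentiability of the flow in [x] comes from Gronwall estimates on the
   compact potential well in which energy conservation confines the orbits. *)

From Stdlib Require Import Reals Lra Classical List.
From Coquelicot Require Import Coquelicot.
Import ListNotations.
Open Scope R_scope.

(* Coquelicot's generic derivative rules do not unify with plain real
   expressions such as [fun t => f t + g t]; these are their real instances. *)
Lemma is_derive_Rplus (f g : R -> R) (x df dg : R) :
  is_derive f x df -> is_derive g x dg -> is_derive (fun t => f t + g t) x (df + dg).
Proof. intros; now apply (is_derive_plus f g). Qed.

Lemma is_derive_Rminus (f g : R -> R) (x df dg : R) :
  is_derive f x df -> is_derive g x dg -> is_derive (fun t => f t - g t) x (df - dg).
Proof. intros; now apply (is_derive_minus f g). Qed.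

Lemma is_derive_Rmult (f g : R -> R) (x df dg : R) :
  is_derive f x df -> is_derive g x dg ->
  is_derive (fun t => f t * g t) x (df * g x + f x * dg).
Proof. intros; apply (is_derive_mult f g); auto; intros; apply Rmult_comm. Qed.

Lemma is_derive_Ropp (f : R -> R) (x df : R) :
  is_derive f x df -> is_derive (fun t => - f t) x (- df).
Proof. exact (is_derive_opp f x df). Qed.

Lemma is_derive_Rconst (c x : R) : is_derive (fun _ : R => c) x 0.
Proof. exact (@is_derive_const R_AbsRing R_NormedModule c x). Qed.

Lemma is_derive_Rid (x : R) : is_derive (fun t : R => t) x 1.
Proof. exact (@is_derive_id R_AbsRing x). Qed.

Lemma is_derive_Rcomp (f g : R -> R) (x df dg : R) :
  is_derive f (g x) df -> is_derive g x dg -> is_derive (fun t => f (g t)) x (dg * df).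
Proof. intros; now apply (is_derive_comp f g). Qed.

Lemma is_derive_eq (f : R -> R) (x l l' : R) : is_derive f x l -> l = l' -> is_derive f x l'.
Proof. now intros H <-. Qed.

Lemma is_derive_shift (f : R -> R) (s h l : R) :
  is_derive f (s + h) l -> is_derive (fun t => f (t + h)) s l.
Proof.
  intros H. eapply is_derive_eq.
  - apply (is_derive_Rcomp f (fun t => t + h)); [exact H|].
    apply is_derive_Rplus; [apply is_derive_Rid|apply is_derive_Rconst].
  - ring.
Qed.

Lemma is_derive_sum_sq (f g : R -> R) (x df dg : R) :
  is_derive f x df -> is_derive g x dg ->
  is_derive (fun t => f t ^ 2 + g t ^ 2) x (2 * f x * df + 2 * g x * dg).
Proof.
  intros Hf Hg. eapply is_derive_eq.
  - apply is_derive_Rplus; apply is_derive_pow; eassumption.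
  - simpl; ring.
Qed.

Lemma is_derive_continuous (f : R -> R) (x l : R) : is_derive f x l -> continuous f x.
Proof. intros H; apply (@ex_derive_continuous R_AbsRing R_NormedModule); now exists l. Qed.

Lemma continuous_eps_delta (f : R -> R) (x : R) : continuous f x -> forall eps, 0 < eps ->
  exists d, 0 < d /\ forall y, Rabs (y - x) < d -> Rabs (f y - f x) < eps.
Proof.
  intros Hc eps He.
  apply continuity_pt_filterlim in Hc.
  destruct (proj1 (continuity_pt_locally f x) Hc (mkposreal eps He)) as [d Hd].
  exists d; split; [apply cond_pos | exact Hd].
Qed.

Lemma derive_nonpos_nonincreasing (f df : R -> R) (a b : R) : a <= b ->
  (forall t, a <= t <= b -> is_derive f t (df t)) ->
  (forall t, a <= t <= b -> df t <= 0) -> f b <= f a.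
Proof.
  intros Hab Hd Hn.
  destruct (MVT_gen f a b df) as [c [Hc Heq]];
    rewrite ?Rmin_left, ?Rmax_right in * by lra.
  - intros x Hx; apply Hd; lra.
  - intros x Hx. apply continuity_pt_filterlim, (is_derive_continuous f x (df x)), Hd; lra.
  - assert (df c <= 0) by (apply Hn; lra). nra.
Qed.

Lemma Rabs_le_of_sq_le (a b : R) : 0 <= b -> a ^ 2 <= b ^ 2 -> Rabs a <= b.
Proof.
  intros Hb H. rewrite <- (Rabs_pos_eq b Hb).
  apply Rsqr_le_abs_0. unfold Rsqr. simpl in H. lra.
Qed.

Lemma exp_le_exp_of_le (x y : R) : x <= y -> exp x <= exp y.
Proof. intros [H|H]; [left; now apply exp_increasing | subst; lra]. Qed.

Lemma exists_pos_lt_all (l : list R) : (forall y, In y l -> 0 < y) ->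
  exists h, 0 < h /\ forall y, In y l -> h < y.
Proof.
  induction l as [|y l IH]; intros Hpos.
  - exists 1. split; [lra | intros y []].
  - destruct IH as [h [Hh Hlt]]; [intros z Hz; apply Hpos; now right|].
    assert (Hy : 0 < y) by (apply Hpos; now left).
    exists (Rmin h y / 2). assert (0 < Rmin h y) by now apply Rmin_pos.
    assert (Rmin h y <= h) by apply Rmin_l. assert (Rmin h y <= y) by apply Rmin_r.
    split; [lra|]. intros z [<-|Hz]; [lra|]. specialize (Hlt z Hz). lra.
Qed.

Lemma eq_0_of_Rabs_le_eps (r : R) : (forall eps, 0 < eps -> Rabs r <= eps) -> r = 0.
Proof.
  intros H. destruct (Req_dec r 0) as [|Hr]; [assumption|].
  assert (Hp : 0 < Rabs r) by now apply Rabs_pos_lt.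
  specialize (H (Rabs r / 2)). lra.
Qed.

Lemma closed_interval_left_limit (f : R -> R) (S d lo hi : R) : 0 < d ->
  continuous f S -> (forall u, S - d < u < S -> lo <= f u <= hi) -> lo <= f S <= hi.
Proof.
  intros Hd Hc Hin. apply NNPP; intros Hout.
  assert (Heps : exists eps, 0 < eps /\ forall z, Rabs (z - f S) < eps -> ~ lo <= z <= hi).
  { destruct (Rle_lt_dec lo (f S)).
    - exists (f S - hi); split; [lra|]. intros z Hz; apply Rabs_def2 in Hz; lra.
    - exists (lo - f S); split; [lra|]. intros z Hz; apply Rabs_def2 in Hz; lra. }
  destruct Heps as [eps [Heps Hz]].
  destruct (continuous_eps_delta f S Hc eps Heps) as [d' [Hd' Hnear]].
  apply (Hz (f (S - Rmin d d' / 2))), Hin.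
  - apply Hnear. assert (0 < Rmin d d') by (apply Rmin_pos; lra).
    assert (Rmin d d' <= d') by apply Rmin_r.
    rewrite Rabs_left; lra.
  - assert (0 < Rmin d d') by (apply Rmin_pos; lra).
    assert (Rmin d d' <= d) by apply Rmin_l. lra.
Qed.

Lemma continuous_induction (f : R -> R) (lo hi : R) :
  (forall t, continuous f t) -> lo <= f 0 <= hi ->
  (forall s, 0 <= s -> (forall u, 0 <= u <= s -> lo <= f u <= hi) ->
     exists eta, 0 < eta /\ forall u, 0 <= u <= s + eta -> lo <= f u <= hi) ->
  forall t, 0 <= t -> lo <= f t <= hi.
Proof.
  intros Hc H0 Hstep t1 Ht1. apply NNPP; intros Hbad.
  set (E := fun s => 0 <= s <= t1 /\ forall u, 0 <= u <= s -> lo <= f u <= hi).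
  assert (HE0 : E 0) by (split; [lra|]; intros u Hu; replace u with 0 by lra; exact H0).
  destruct (completeness E) as [S [HS1 HS2]]; [now exists t1; intros s [Hs _] | now exists 0 |].
  assert (HS0 : 0 <= S) by now apply HS1.
  assert (HSt : S <= t1) by (apply HS2; intros s [Hs _]; lra).
  assert (Hbelow : forall u, 0 <= u < S -> lo <= f u <= hi).
  { intros u Hu. apply NNPP; intros Hnot.
    enough (S <= u) by lra. apply HS2. intros s [Hs Hin].
    destruct (Rle_lt_dec s u) as [|Hsu]; [assumption|].
    exfalso; apply Hnot, Hin; lra. }
  assert (HAll : forall u, 0 <= u <= S -> lo <= f u <= hi).
  { intros u Hu. destruct (Req_dec u S) as [->|]; [|apply Hbelow; lra].
    destruct (Req_dec S 0) as [->|]; [exact H0|].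
    apply (closed_interval_left_limit f S S); auto; [lra|].
    intros v Hv; apply Hbelow; lra. }
  destruct (Req_dec S t1) as [<-|HSt1]; [apply Hbad, HAll; lra|].
  destruct (Hstep S HS0 HAll) as [eta [Heta Hext]].
  set (s' := Rmin (S + eta) t1).
  assert (s' <= S + eta) by apply Rmin_l. assert (s' <= t1) by apply Rmin_r.
  assert (S < s') by (apply Rmin_glb_lt; lra).
  assert (HEs' : E s') by (split; [lra|]; intros u Hu; apply Hext; lra).
  specialize (HS1 s' HEs'). lra.
Qed.

Lemma periodic_nat (f : R -> R) (T : R) : periodic f T ->
  forall n t, f (t + INR n * T) = f t.
Proof.
  intros Hp n; induction n as [|n IH]; intros t.
  - simpl. f_equal. ring.
  - rewrite S_INR. replace (t + (INR n + 1) * T) with (t + INR n * T + T) by ring.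
    rewrite Hp. apply IH.
Qed.

Lemma periodic_Derive (f : R -> R) (T : R) : periodic f T ->
  (forall t, ex_derive f t) -> periodic (Derive f) T.
Proof.
  intros Hp Hd t. symmetry. apply is_derive_unique.
  apply (is_derive_ext (fun s => f (s + T))); [intros; apply Hp|].
  apply is_derive_shift, Derive_correct, Hd.
Qed.

Lemma periodic_bounded (f : R -> R) (T : R) : 0 < T -> periodic f T ->
  (forall t, continuous f t) -> exists M, forall t, Rabs (f t) <= M.
Proof.
  intros HT Hp Hc.
  destruct (@bounded_continuity R_AbsRing R_NormedModule f 0 T) as [M HM];
    [intros; apply Hc|].
  assert (Hnat : forall n s, 0 <= s <= INR n * T -> Rabs (f s) <= M).
  { induction n as [|n IH]; intros s Hs.
    - simpl in Hs. left. apply (HM s). lra.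
    - rewrite S_INR in Hs. destruct (Rle_lt_dec s T).
      + left. apply (HM s). lra.
      + replace s with ((s - T) + T) by ring. rewrite Hp. apply IH. lra. }
  exists M. intros t.
  destruct (INR_archimed T (- t) HT) as [n Hn].
  destruct (INR_archimed T (t + INR n * T) HT) as [m Hm].
  rewrite <- (periodic_nat f T Hp n). apply (Hnat m). lra.
Qed.

Lemma min_period_not_eventually_const (f : R -> R) (T t1 : R) : is_min_period f T ->
  ~ (forall s, 0 <= s -> f (s + t1) = f t1).
Proof.
  intros [HT [Hp Hmin]] Hconst.
  assert (Hf : forall t, f t = f t1).
  { intros t. destruct (INR_archimed T (t1 - t) HT) as [n Hn].
    rewrite <- (periodic_nat f T Hp n t).
    replace (t + INR n * T) with ((t + INR n * T - t1) + t1) by ring.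
    apply Hconst. lra. }
  enough (T <= T / 2) by lra.
  apply Hmin; [lra|]. intros t; now rewrite !Hf.
Qed.

Lemma in_interval_convex (a b : Rbar) (p r y : R) :
  in_interval a b p -> in_interval a b r -> p <= y <= r -> in_interval a b y.
Proof. unfold in_interval; destruct a, b; simpl; intros; lra. Qed.

Lemma in_interval_open (a b : Rbar) (y : R) : in_interval a b y ->
  exists e, 0 < e /\ forall z, Rabs (z - y) < e -> in_interval a b z.
Proof.
  unfold in_interval; destruct a as [a| |], b as [b| |]; simpl; intros [H1 H2];
    try contradiction.
  - exists (Rmin (y - a) (b - y)). split; [apply Rmin_pos; lra|].
    intros z Hz. assert (Rmin (y - a) (b - y) <= y - a) by apply Rmin_l.
    assert (Rmin (y - a) (b - y) <= b - y) by apply Rmin_r.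
    apply Rabs_def2 in Hz. lra.
  - exists (y - a). split; [lra|]. intros z Hz. apply Rabs_def2 in Hz. lra.
  - exists (b - y). split; [lra|]. intros z Hz. apply Rabs_def2 in Hz. lra.
  - exists 1. split; [lra|]. auto.
Qed.

Section C1_on_segment.

Variables (f : R -> R) (k1 k2 : R).
Hypothesis Hf : forall z, k1 <= z <= k2 -> is_derive f z (Derive f z).
Hypothesis Hcf : forall z, k1 <= z <= k2 -> continuous (Derive f) z.

Lemma mvt_segment (y z : R) : k1 <= y <= k2 -> k1 <= z <= k2 ->
  exists c, k1 <= c <= k2 /\ Rabs (c - z) <= Rabs (y - z) /\
            f y - f z = Derive f c * (y - z).
Proof.
  intros Hy Hz.
  destruct (MVT_gen f z y (Derive f)) as [c [Hc Heq]].
  - intros w Hw. apply Hf. unfold Rmin, Rmax in Hw; destruct (Rle_dec z y); lra.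
  - intros w Hw. apply continuity_pt_filterlim, (is_derive_continuous f w (Derive f w)), Hf.
    unfold Rmin, Rmax in Hw; destruct (Rle_dec z y); lra.
  - exists c. unfold Rmin, Rmax in Hc; destruct (Rle_dec z y).
    + split; [lra|]. split; [rewrite !Rabs_right; lra | exact Heq].
    + split; [lra|]. split; [rewrite !Rabs_left1; lra | exact Heq].
Qed.

Lemma Derive_bounded_segment : exists M, 0 < M /\ forall z, k1 <= z <= k2 -> Rabs (Derive f z) <= M.
Proof.
  destruct (@bounded_continuity R_AbsRing R_NormedModule (Derive f) k1 k2 Hcf) as [M HM].
  exists (Rmax M 1). split; [apply Rlt_le_trans with 1; [lra | apply Rmax_r]|].
  intros z Hz. apply Rle_trans with M; [left; apply (HM z Hz) | apply Rmax_l].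
Qed.

Lemma lipschitz_segment (M : R) : (forall z, k1 <= z <= k2 -> Rabs (Derive f z) <= M) ->
  forall y z, k1 <= y <= k2 -> k1 <= z <= k2 -> Rabs (f y - f z) <= M * Rabs (y - z).
Proof.
  intros HM y z Hy Hz.
  destruct (mvt_segment y z Hy Hz) as [c [Hc [_ ->]]].
  rewrite Rabs_mult. apply Rmult_le_compat_r; [apply Rabs_pos | apply HM, Hc].
Qed.

Lemma uniform_taylor_segment : forall eps, 0 < eps -> exists eta, 0 < eta /\
  forall y z, k1 <= y <= k2 -> k1 <= z <= k2 -> Rabs (y - z) < eta ->
  Rabs (f y - f z - Derive f z * (y - z)) <= eps * Rabs (y - z).
Proof.
  intros eps He.
  destruct (Heine_cor2 (f := Derive f) (a := k1) (b := k2)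
     (fun x Hx => proj2 (continuity_pt_filterlim _ _) (Hcf x Hx)) (mkposreal eps He))
    as [eta Heta].
  exists eta. split; [apply cond_pos|].
  intros y z Hy Hz Hyz.
  destruct (mvt_segment y z Hy Hz) as [c [Hc [Hcz ->]]].
  replace (Derive f c * (y - z) - Derive f z * (y - z))
    with ((Derive f c - Derive f z) * (y - z)) by ring.
  rewrite Rabs_mult. apply Rmult_le_compat_r; [apply Rabs_pos|].
  left. apply (Heta c z Hc Hz). lra.
Qed.

End C1_on_segment.

(** * Gronwall estimates *)

Lemma gronwall_linear (phi dphi : R -> R) (C K L : R) : 0 < C -> 0 <= K ->
  (forall t, 0 <= t <= L -> is_derive phi t (dphi t)) ->
  (forall t, 0 <= t <= L -> dphi t <= C * phi t + K) ->
  forall t, 0 <= t <= L -> phi t <= (phi 0 + K / C) * exp (C * t).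
Proof.
  intros HC HK Hd Hb t Ht.
  set (psi := fun s => (phi s + K / C) * exp (- C * s)).
  assert (Hpsi : psi t <= psi 0).
  { apply (derive_nonpos_nonincreasing psi
             (fun s => (dphi s - C * phi s - K) * exp (- C * s))); [lra| |].
    - intros s Hs. unfold psi. eapply is_derive_eq.
      + apply is_derive_Rmult.
        * apply is_derive_Rplus; [apply Hd; lra | apply is_derive_Rconst].
        * apply (is_derive_Rcomp exp (fun s => - C * s)); [apply is_derive_exp|].
          apply (is_derive_scal (fun s => s)), is_derive_Rid.
      + cbv beta. field. lra.
    - intros s Hs. assert (0 < exp (- C * s)) by apply exp_pos.
      assert (dphi s <= C * phi s + K) by (apply Hb; lra). nra. }
  unfold psi in Hpsi. rewrite Rmult_0_r, exp_0, Rmult_1_r in Hpsi.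
  assert (E : exp (- C * t) * exp (C * t) = 1)
    by (rewrite <- exp_plus, <- exp_0; f_equal; ring).
  assert (0 < exp (C * t)) by apply exp_pos.
  assert (0 <= K / C) by (apply Rdiv_le_0_compat; lra).
  assert (Hm : (phi t + K / C) * exp (- C * t) * exp (C * t)
               <= (phi 0 + K / C) * exp (C * t)) by nra.
  rewrite Rmult_assoc, E, Rmult_1_r in Hm. lra.
Qed.

Lemma energy_gronwall (y dy e : R -> R) (M k L : R) : 0 <= M -> 0 <= k ->
  (forall s, 0 <= s <= L -> is_derive y s (dy s) /\ is_derive dy s (e s)) ->
  (forall s, 0 <= s <= L -> Rabs (e s) <= M * Rabs (y s) + k) ->
  forall t, 0 <= t <= L ->
  y t ^ 2 + dy t ^ 2 <= (y 0 ^ 2 + dy 0 ^ 2 + k ^ 2) * exp ((2 + M) * t).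
Proof.
  intros HM Hk Hd He t Ht.
  assert (H := gronwall_linear (fun s => y s ^ 2 + dy s ^ 2)
                 (fun s => 2 * y s * dy s + 2 * dy s * e s) (2 + M) (k ^ 2) L).
  eapply Rle_trans; [apply H; auto; try lra; [apply pow2_ge_0| |] |].
  - intros s Hs. apply is_derive_sum_sq; [apply (proj1 (Hd s Hs)) | apply (proj2 (Hd s Hs))].
  - intros s Hs. specialize (He s Hs).
    assert (dy s * e s <= Rabs (dy s) * Rabs (e s)) by (rewrite <- Rabs_mult; apply Rle_abs).
    assert (Rabs (dy s) * Rabs (e s) <= Rabs (dy s) * (M * Rabs (y s) + k))
      by (apply Rmult_le_compat_l; [apply Rabs_pos | exact He]).
    assert (0 <= (Rabs (dy s) - Rabs (y s)) ^ 2) by apply pow2_ge_0.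
    assert (0 <= (Rabs (dy s) - k) ^ 2) by apply pow2_ge_0.
    assert (0 <= (y s - dy s) ^ 2) by apply pow2_ge_0.
    assert (Rabs (y s) ^ 2 = y s ^ 2) by apply pow2_abs.
    assert (Rabs (dy s) ^ 2 = dy s ^ 2) by apply pow2_abs.
    assert (0 <= Rabs (y s)) by apply Rabs_pos.
    assert (0 <= Rabs (dy s)) by apply Rabs_pos.
    nra.
  - apply Rmult_le_compat_r; [apply Rlt_le, exp_pos|].
    assert (0 <= k ^ 2) by apply pow2_ge_0.
    assert (k ^ 2 / (2 + M) <= k ^ 2)
      by (apply Rmult_le_reg_r with (2 + M); [lra|]; field_simplify; nra).
    lra.
Qed.

Lemma energy_gronwall_zero (y dy e : R -> R) (M : R) : 0 <= M ->
  (forall s, 0 <= s -> is_derive y s (dy s) /\ is_derive dy s (e s)) ->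
  (forall s, 0 <= s -> Rabs (e s) <= M * Rabs (y s)) ->
  y 0 = 0 -> dy 0 = 0 -> forall t, 0 <= t -> y t = 0 /\ dy t = 0.
Proof.
  intros HM Hd He Hy0 Hdy0 t Ht.
  assert (H := energy_gronwall y dy e M 0 t HM (Rle_refl 0)).
  assert (Hle : y t ^ 2 + dy t ^ 2 <= 0).
  { eapply Rle_trans; [apply H; try lra|].
    - intros s Hs; apply Hd; lra.
    - intros s Hs; rewrite Rplus_0_r; apply He; lra.
    - rewrite Hy0, Hdy0. right; ring. }
  assert (0 <= y t ^ 2) by apply pow2_ge_0.
  assert (0 <= dy t ^ 2) by apply pow2_ge_0.
  split; nra.
Qed.

Definition is_lin_sol (q y dy : R -> R) : Prop :=
  forall t, is_derive y t (dy t) /\ is_derive dy t (- q t * y t).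

Lemma lin_sol_zero (q y dy : R -> R) (M : R) : 0 <= M -> (forall t, Rabs (q t) <= M) ->
  is_lin_sol q y dy -> y 0 = 0 -> dy 0 = 0 -> forall t, y t = 0.
Proof.
  intros HM Hq Hd Hy0 Hdy0 t.
  assert (Hbound : forall q' y' : R -> R, (forall s, Rabs (q' s) <= M) ->
            forall s, Rabs (- q' s * y' s) <= M * Rabs (y' s)).
  { intros q' y' Hq' s. rewrite Rabs_mult, Rabs_Ropp.
    apply Rmult_le_compat_r; [apply Rabs_pos | apply Hq']. }
  destruct (Rle_lt_dec 0 t) as [Ht|Ht].
  - refine (proj1 (energy_gronwall_zero y dy (fun s => - q s * y s) M HM _ _ Hy0 Hdy0 t Ht)).
    + intros s _; apply Hd.
    + intros s _; apply Hbound, Hq.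
  - replace t with (- (- t)) by ring.
    refine (proj1 (energy_gronwall_zero (fun s => y (- s)) (fun s => - dy (- s))
             (fun s => - q (- s) * y (- s)) M HM _ _ _ _ (- t) _)); cbv beta; try lra.
    + intros s _. split.
      * eapply is_derive_eq; [apply (is_derive_Rcomp y (fun s => - s)) |].
        -- apply (proj1 (Hd (- s))).
        -- apply is_derive_Ropp, is_derive_Rid.
        -- ring.
      * eapply is_derive_eq; [apply is_derive_Ropp, (is_derive_Rcomp dy (fun s => - s)) |].
        -- apply (proj2 (Hd (- s))).
        -- apply is_derive_Ropp, is_derive_Rid.
        -- ring.
    + intros s _; apply (Hbound (fun s => q (- s)) (fun s => y (- s))); intros; apply Hq.
    + now rewrite Ropp_0.
    + rewrite Ropp_0, Hdy0; ring.
Qed.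

(** * Energy *)

Lemma solves_ivp_Derive (g : R -> R) (y : R) (f : R -> R) : solves_ivp g y f ->
  (forall t, is_derive f t (Derive f t) /\ is_derive (Derive f) t (- g (f t))) /\
  f 0 = y /\ Derive f 0 = 0.
Proof.
  intros [df [Hd [H0 Hd0]]].
  assert (E : forall t, Derive f t = df t) by (intros t; apply is_derive_unique, Hd).
  split; [|split; [exact H0 | now rewrite E]].
  intros t. rewrite E. split; [apply (proj1 (Hd t))|].
  apply (is_derive_ext df); [intros; symmetry; apply E | apply (proj2 (Hd t))].
Qed.

Lemma negative_turning_point (g : R -> R) (a b : Rbar) :
  (forall x, in_interval a b x ->
     exists! y, in_interval a b y /\ potential g y = potential g x /\ sgn y = - sgn x) ->
  forall x, in_interval a b x -> 0 < x ->
  exists hx, in_interval a b hx /\ hx < 0 /\ potential g hx = potential g x.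
Proof.
  intros Hh x Hx Hx0. destruct (Hh x Hx) as [y [[Hy [HV Hs]] _]].
  exists y. split; [exact Hy | split; [|exact HV]].
  unfold sgn in Hs. destruct (Rlt_dec 0 x); [|lra].
  destruct (Rlt_dec 0 y); [lra|]. destruct (Rlt_dec y 0); lra.
Qed.

Section Energy.

Variables (g : R -> R) (a b : Rbar).
Hypotheses (Ha0 : Rbar_lt a 0) (H0b : Rbar_lt 0 b).
Hypothesis Hgc : forall z, in_interval a b z -> continuous g z.

Lemma potential_derive (y : R) : in_interval a b y -> is_derive (potential g) y (g y).
Proof.
  intros Hy.
  apply (is_derive_RInt g (potential g) 0 y); [|apply Hgc, Hy].
  destruct (in_interval_open a b y Hy) as [e [He HeJ]].
  exists (mkposreal e He). intros z Hz.
  apply (@RInt_correct R_CompleteNormedModule), (@ex_RInt_continuous R_CompleteNormedModule).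
  intros w Hw. apply Hgc.
  assert (Hz' : in_interval a b z) by now apply HeJ.
  assert (H0 : in_interval a b 0) by now split.
  unfold Rmin, Rmax in Hw; destruct (Rle_dec 0 z).
  - apply (in_interval_convex a b 0 z); auto.
  - apply (in_interval_convex a b z 0); auto; lra.
Qed.

Lemma energy_conservation (f df : R -> R) (x t : R) :
  (forall s, is_derive f s (df s) /\ is_derive df s (- g (f s))) ->
  f 0 = x -> df 0 = 0 -> 0 <= t -> (forall u, 0 <= u <= t -> in_interval a b (f u)) ->
  df t ^ 2 / 2 + potential g (f t) = potential g x.
Proof.
  intros Hd Hf0 Hdf0 Ht HJ.
  set (E := fun u => / 2 * df u ^ 2 + potential g (f u)).
  assert (HE : forall u, 0 <= u <= t -> is_derive E u 0).
  { intros u Hu. unfold E. eapply is_derive_eq.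
    - apply is_derive_Rplus.
      + apply (is_derive_scal (fun u => df u ^ 2)), is_derive_pow, (proj2 (Hd u)).
      + apply (is_derive_Rcomp (potential g) f);
          [apply potential_derive, HJ, Hu | apply (proj1 (Hd u))].
    - simpl. field. }
  assert (E1 : E t <= E 0).
  { apply (derive_nonpos_nonincreasing E (fun _ => 0)); [lra | exact HE | intros; lra]. }
  assert (E2 : - E t <= - E 0).
  { apply (derive_nonpos_nonincreasing (fun u => - E u) (fun _ => 0)); [lra| |intros; lra].
    intros u Hu. eapply is_derive_eq; [apply is_derive_Ropp, HE, Hu | ring]. }
  unfold E in E1, E2. rewrite Hdf0, Hf0 in E1, E2.
  replace (0 ^ 2) with 0 in * by ring. lra.
Qed.

Hypothesis Hinc : forall x y, in_interval a b x -> in_interval a b y ->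
  0 < x -> x < y -> potential g x < potential g y.
Hypothesis Hdec : forall x y, in_interval a b x -> in_interval a b y ->
  x < y -> y < 0 -> potential g y < potential g x.

(* Energy conservation keeps the motion in the potential well [hx, x], as long as
   it stays in J; continuous induction removes that proviso. *)
Lemma energy_confinement (f df : R -> R) (x hx : R) :
  in_interval a b x -> 0 < x -> in_interval a b hx -> hx < 0 ->
  potential g hx = potential g x ->
  (forall s, is_derive f s (df s) /\ is_derive df s (- g (f s))) ->
  f 0 = x -> df 0 = 0 -> forall t, 0 <= t -> hx <= f t <= x.
Proof.
  intros Hx Hx0 Hhx Hhx0 HV Hd Hf0 Hdf0.
  assert (Hcf : forall t, continuous f t)
    by (intros t; apply (is_derive_continuous f t (df t)), (proj1 (Hd t))).
  apply continuous_induction; auto; [rewrite Hf0; lra|].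
  intros s Hs Hin.
  assert (HfsJ : in_interval a b (f s))
    by (apply (in_interval_convex a b hx x); auto; apply Hin; lra).
  destruct (in_interval_open a b (f s) HfsJ) as [e [He HeJ]].
  destruct (continuous_eps_delta f s (Hcf s) e He) as [d [Hd0 Hnear]].
  exists (d / 2). split; [lra|].
  assert (HJ : forall u, 0 <= u <= s + d / 2 -> in_interval a b (f u)).
  { intros u Hu. destruct (Rle_dec u s).
    - apply (in_interval_convex a b hx x); auto. apply Hin; lra.
    - apply HeJ, Hnear. rewrite Rabs_right; lra. }
  intros u Hu.
  assert (HVu : potential g (f u) <= potential g x).
  { rewrite <- (energy_conservation f df x u Hd Hf0 Hdf0 (proj1 Hu)); [|intros; apply HJ; lra].
    assert (0 <= df u ^ 2) by apply pow2_ge_0. lra. }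
  assert (HfuJ := HJ u Hu).
  split.
  - destruct (Rle_lt_dec hx (f u)) as [|Hlt]; [assumption|].
    assert (potential g hx < potential g (f u)) by (apply Hdec; auto). lra.
  - destruct (Rle_lt_dec (f u) x) as [|Hlt]; [assumption|].
    assert (potential g x < potential g (f u)) by (apply Hinc; auto). lra.
Qed.

Lemma periodic_orbit_confined (f : R -> R) (Tp x hx : R) :
  in_interval a b x -> 0 < x -> in_interval a b hx -> hx < 0 ->
  potential g hx = potential g x ->
  solves_ivp g x f -> 0 < Tp -> periodic f Tp -> forall t, hx <= f t <= x.
Proof.
  intros Hx Hx0 Hhx Hhx0 HV Hivp HT Hp t.
  destruct (solves_ivp_Derive g x f Hivp) as [Hd [H0 Hd0]].
  destruct (INR_archimed Tp (- t) HT) as [n Hn].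
  rewrite <- (periodic_nat f Tp Hp n t).
  apply (energy_confinement f (Derive f) x hx); auto. lra.
Qed.

End Energy.

(** * Floquet theory *)

(* The
   ansatz [u = A v + w0 G / N], [N = v^2 + G^2], has Wronskian [v u' + G u = w0];
   [u'' = -Q u] then forces [A' = w0 (1 - Q) (v^2 - G^2) / N^2]. *)
Lemma second_solution (Q v G : R -> R) (w0 : R) :
  (forall t, is_derive v t (- G t)) -> (forall t, is_derive G t (Q t * v t)) ->
  (forall t, continuous Q t) -> (forall t, v t ^ 2 + G t ^ 2 <> 0) -> v 0 = 0 ->
  exists u du, is_lin_sol Q u du /\ (forall t, v t * du t + G t * u t = w0) /\ du 0 = 0.
Proof.
  intros Hv HG HQ HN Hv0.
  set (N := fun t => v t ^ 2 + G t ^ 2).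
  set (al := fun t => w0 * (1 - Q t) * (v t ^ 2 - G t ^ 2) / N t ^ 2).
  assert (Hcal : forall t, continuous al t).
  { intros t. apply continuity_pt_filterlim. unfold al, N.
    assert (Hcv : forall t, continuity_pt v t)
      by (intros s; apply continuity_pt_filterlim, (is_derive_continuous v s _ (Hv s))).
    assert (HcG : forall t, continuity_pt G t)
      by (intros s; apply continuity_pt_filterlim, (is_derive_continuous G s _ (HG s))).
    assert (HcQ : forall t, continuity_pt Q t) by (intros s; apply continuity_pt_filterlim, HQ).
    apply continuity_pt_div; [| |apply pow_nonzero, HN];
      repeat first [ apply continuity_pt_mult | apply continuity_pt_minus
                   | apply continuity_pt_plus | apply continuity_pt_pow
                   | apply continuity_pt_const; intros ? ?; reflexivity
                   | apply Hcv | apply HcG | apply HcQ ]. }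
  set (A := fun t => RInt al 0 t).
  assert (HA : forall t, is_derive A t (al t)).
  { intros t. apply (is_derive_RInt al A 0 t); [|apply Hcal].
    exists (mkposreal 1 Rlt_0_1). intros z _.
    apply (@RInt_correct R_CompleteNormedModule), (@ex_RInt_continuous R_CompleteNormedModule).
    intros; apply Hcal. }
  assert (HNd : forall t, is_derive N t (2 * v t * (- G t) + 2 * G t * (Q t * v t)))
    by (intros t; apply is_derive_sum_sq; auto).
  assert (Hb : forall t, is_derive (fun s => w0 / N s) t
                 ((0 * N t - w0 * (2 * v t * (- G t) + 2 * G t * (Q t * v t))) / N t ^ 2))
    by (intros t; apply (is_derive_div (fun _ => w0));
        [apply is_derive_Rconst | apply HNd | apply HN]).
  exists (fun t => A t * v t + w0 / N t * G t), (fun t => - A t * G t + w0 / N t * v t).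
  split; [|split].
  - intros t. assert (Nt := HN t). split.
    + eapply is_derive_eq.
      * apply is_derive_Rplus; apply is_derive_Rmult; auto.
      * unfold al, N in *. field. exact Nt.
    + eapply is_derive_eq.
      * apply is_derive_Rplus; apply is_derive_Rmult; auto. apply is_derive_Ropp, HA.
      * unfold al, N in *. field. exact Nt.
  - intros t. assert (Nt := HN t). unfold N in *. field. exact Nt.
  - assert (HA0 : A 0 = 0) by exact (@RInt_point R_CompleteNormedModule 0 al).
    rewrite HA0, Hv0. ring.
Qed.

Lemma is_lin_sol_minus_scal (q y1 dy1 y2 dy2 : R -> R) (k : R) :
  is_lin_sol q y1 dy1 -> is_lin_sol q y2 dy2 ->
  is_lin_sol q (fun t => y1 t - k * y2 t) (fun t => dy1 t - k * dy2 t).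
Proof.
  intros H1 H2 t. split.
  - apply is_derive_Rminus; [apply H1 | apply is_derive_scal, H2].
  - eapply is_derive_eq; [apply is_derive_Rminus; [apply H1 | apply is_derive_scal, H2] | ring].
Qed.

Lemma is_lin_sol_shift (q y dy : R -> R) (T : R) : periodic q T ->
  is_lin_sol q y dy -> is_lin_sol q (fun t => y (t + T)) (fun t => dy (t + T)).
Proof.
  intros Hq Hy t. split; apply is_derive_shift; [apply Hy|].
  rewrite <- (Hq t). apply Hy.
Qed.

Lemma lin_growth (y v : R -> R) (T k : R) :
  (forall t, y (t + T) = y t + k * v t) -> periodic v T ->
  forall n t, y (t + INR n * T) = y t + INR n * k * v t.
Proof.
  intros Hy Hv n; induction n as [|n IH]; intros t.
  - simpl. replace (t + 0 * T) with t by ring. ring.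
  - rewrite S_INR. replace (t + (INR n + 1) * T) with ((t + INR n * T) + T) by ring.
    rewrite Hy, IH, (periodic_nat v T Hv). ring.
Qed.

Section Floquet.

Variables (q v dv u du : R -> R) (T M : R).
Hypotheses (HM : 0 <= M) (Hq : forall t, Rabs (q t) <= M) (Hqper : periodic q T).
Hypotheses (Hv : is_lin_sol q v dv) (Hv0 : v 0 = 0) (Hdv0 : dv 0 <> 0).
Hypotheses (Hu : is_lin_sol q u du) (Hu0 : u 0 = 1) (Hdu0 : du 0 = 0).

Lemma lin_sol_decomp (y dy : R -> R) : is_lin_sol q y dy ->
  forall t, y t = y 0 * u t + dy 0 / dv 0 * v t.
Proof.
  intros Hy t.
  assert (Hz := lin_sol_zero q _ _ M HM Hq
    (is_lin_sol_minus_scal q _ _ v dv (dy 0 / dv 0)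
       (is_lin_sol_minus_scal q y dy u du (y 0) Hy Hu) Hv)).
  cbv beta in Hz.
  assert (y t - y 0 * u t - dy 0 / dv 0 * v t = 0); [|lra].
  apply Hz; [rewrite Hu0, Hv0; ring | rewrite Hdu0; field; exact Hdv0].
Qed.

Lemma monodromy : u T = 1 -> forall t, u (t + T) = u t + du T / dv 0 * v t.
Proof.
  intros HuT t.
  rewrite (lin_sol_decomp _ _ (is_lin_sol_shift q u du T Hqper Hu) t).
  rewrite Rplus_0_l, HuT. ring.
Qed.

Hypotheses (HT : 0 < T) (HuT : u T = 1) (Hvper : periodic v T).

Lemma lin_sol_drift (y dy : R -> R) : is_lin_sol q y dy ->
  forall n t, y (t + INR n * T) = y t + INR n * (y 0 * (du T / dv 0)) * v t.
Proof.
  intros Hy. apply lin_growth; [|exact Hvper].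
  intros t. rewrite (lin_sol_decomp y dy Hy (t + T)), (lin_sol_decomp y dy Hy t).
  rewrite monodromy, Hvper; [ring | exact HuT].
Qed.

Lemma lin_sol_nontrivial : exists t, v t <> 0.
Proof.
  apply NNPP; intros Hno. apply Hdv0.
  rewrite <- (is_derive_unique v 0 (dv 0) (proj1 (Hv 0))).
  apply is_derive_unique.
  apply (is_derive_ext (fun _ => 0)); [|apply is_derive_Rconst].
  intros t. apply NNPP; intros Ht. apply Hno; now exists t.
Qed.

Lemma lin_sol_bounded_by_drift (y dy : R -> R) : is_lin_sol q y dy ->
  (exists B, forall t, Rabs (y t) <= B) -> y 0 * (du T / dv 0) = 0.
Proof.
  intros Hy [B HB]. destruct lin_sol_nontrivial as [ts Hts].
  apply NNPP; intros Hk.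
  set (K := y 0 * (du T / dv 0) * v ts).
  assert (Hpos : 0 < Rabs K) by (apply Rabs_pos_lt, Rmult_integral_contrapositive; auto).
  destruct (INR_archimed _ (2 * B) Hpos) as [n Hn].
  assert (H1 := HB (ts + INR n * T)).
  rewrite (lin_sol_drift y dy Hy) in H1.
  replace (INR n * (y 0 * (du T / dv 0)) * v ts) with (INR n * K) in H1 by (unfold K; ring).
  assert (H2 := HB ts).
  assert (H3 : Rabs (INR n * K) <= Rabs (y ts + INR n * K) + Rabs (- y ts))
    by (replace (INR n * K) with ((y ts + INR n * K) + - y ts) at 1 by ring; apply Rabs_triang).
  rewrite Rabs_Ropp, Rabs_mult, (Rabs_right (INR n)) in H3 by apply Rle_ge, pos_INR.
  lra.
Qed.

Lemma all_periodic_iff :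
  (forall y, lin_sol q y -> periodic y T) <-> du T / dv 0 = 0.
Proof.
  split.
  - intros Hall. destruct lin_sol_nontrivial as [ts Hts].
    assert (Hp := Hall u (ex_intro _ du Hu) ts).
    rewrite monodromy in Hp by exact HuT.
    apply (Rmult_eq_reg_r (v ts)); [lra | exact Hts].
  - intros Hc y [dy Hy] t.
    rewrite <- (Rmult_1_l T) at 1. rewrite <- INR_1.
    rewrite (lin_sol_drift y dy Hy), Hc. ring.
Qed.

Lemma unbounded_iff_not_proportional : du T / dv 0 <> 0 ->
  forall y, lin_sol q y -> (unbounded y <-> ~ (exists k, forall t, y t = k * v t)).
Proof.
  intros Hc y [dy Hy]. split.
  - intros Hunb [k Hk]. apply Hunb.
    destruct (periodic_bounded v T HT Hvper) as [B HB].
    { intros t; apply (is_derive_continuous v t (dv t)), (proj1 (Hv t)). }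
    exists (Rabs k * B). intros t. rewrite Hk, Rabs_mult.
    apply Rmult_le_compat_l; [apply Rabs_pos | apply HB].
  - intros Hnp Hbd. apply Hnp.
    assert (Hy0 : y 0 = 0).
    { apply (Rmult_eq_reg_r (du T / dv 0)); [|exact Hc].
      rewrite Rmult_0_l. apply (lin_sol_bounded_by_drift y dy Hy Hbd). }
    exists (dy 0 / dv 0). intros t. rewrite (lin_sol_decomp y dy Hy t), Hy0. ring.
Qed.

Lemma floquet_dichotomy :
  ((forall y, lin_sol q y -> periodic y T) \/
   (forall y, lin_sol q y -> (unbounded y <-> ~ (exists k, forall t, y t = k * v t)))) /\
  ((forall y, lin_sol q y -> periodic y T) <-> du T / dv 0 = 0).
Proof.
  split; [|exact all_periodic_iff].
  destruct (Req_dec (du T / dv 0) 0) as [Hc|Hc].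
  - left. now apply all_periodic_iff.
  - right. now apply unbounded_iff_not_proportional.
Qed.

End Floquet.

(** * Dependence on the amplitude *)

Section Dependence.

Variables (f : R -> R) (k1 k2 : R) (Xf Vf : R -> R -> R) (x0 dl L : R).
Hypothesis Hf : forall z, k1 <= z <= k2 -> is_derive f z (Derive f z).
Hypothesis Hcf : forall z, k1 <= z <= k2 -> continuous (Derive f) z.
Hypotheses (HL : 0 <= L) (Hdl : 0 < dl).
Hypothesis HXd : forall x, Rabs (x - x0) <= dl -> forall t,
  is_derive (fun s => Xf s x) t (Vf x t) /\ is_derive (Vf x) t (- f (Xf t x)).
Hypothesis HX0 : forall x, Rabs (x - x0) <= dl -> Xf 0 x = x /\ Vf x 0 = 0.
Hypothesis HK : forall x, Rabs (x - x0) <= dl -> forall t, 0 <= t -> k1 <= Xf t x <= k2.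

Lemma orbit_lipschitz_dependence (M : R) : 0 <= M ->
  (forall z, k1 <= z <= k2 -> Rabs (Derive f z) <= M) ->
  forall x, Rabs (x - x0) <= dl -> forall t, 0 <= t <= L ->
  Rabs (Xf t x - Xf t x0) <= exp ((2 + M) * L) * Rabs (x - x0).
Proof.
  intros HM HMb x Hx t Ht.
  assert (Hx0 : Rabs (x0 - x0) <= dl) by (rewrite Rminus_diag, Rabs_R0; lra).
  destruct (HX0 x Hx) as [A1 A2]. destruct (HX0 x0 Hx0) as [B1 B2].
  assert (H := energy_gronwall (fun s => Xf s x - Xf s x0) (fun s => Vf x s - Vf x0 s)
                 (fun s => - f (Xf s x) - - f (Xf s x0)) M 0 L HM (Rle_refl 0)).
  cbv beta in H. rewrite A1, A2, B1, B2 in H.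
  set (C := exp ((2 + M) * L)).
  assert (HC : 1 <= C) by (assert (1 + (2 + M) * L <= C) by apply exp_ineq1_le; nra).
  assert (Hle : (Xf t x - Xf t x0) ^ 2 + (Vf x t - Vf x0 t) ^ 2 <= (x - x0) ^ 2 * C).
  { eapply Rle_trans; [apply H; [| |exact Ht] |].
    - intros s _. split; apply is_derive_Rminus; apply HXd; auto.
    - intros s Hs. rewrite Rplus_0_r, Rabs_minus_sym.
      replace (- f (Xf s x0) - - f (Xf s x)) with (f (Xf s x) - f (Xf s x0)) by ring.
      apply (lipschitz_segment f k1 k2 Hf M HMb); apply HK; auto; lra.
    - replace ((x - x0) ^ 2 + (0 - 0) ^ 2 + 0 ^ 2) with ((x - x0) ^ 2) by ring.
      apply Rmult_le_compat_l; [apply pow2_ge_0 | apply exp_le_exp_of_le; nra]. }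
  apply Rabs_le_of_sq_le; [apply Rmult_le_pos; [lra | apply Rabs_pos]|].
  rewrite Rpow_mult_distr, pow2_abs.
  assert (0 <= (Vf x t - Vf x0 t) ^ 2) by apply pow2_ge_0.
  assert (0 <= (x - x0) ^ 2) by apply pow2_ge_0.
  assert (C <= C ^ 2) by (simpl; nra).
  nra.
Qed.

Variables (u du : R -> R).
Hypothesis Hu : is_lin_sol (fun t => Derive f (Xf t x0)) u du.
Hypotheses (Hu0 : u 0 = 1) (Hdu0 : du 0 = 0).

(* [z = Xf . x - Xf . x0 - (x - x0) u] solves [z'' = -f'(Xf . x0) z - R] with the
   Taylor remainder [R = f(Xf . x) - f(Xf . x0) - f'(Xf . x0) (Xf . x - Xf . x0)]. *)
Lemma linearization_error (M e1 eta x : R) : 0 < M ->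
  (forall z, k1 <= z <= k2 -> Rabs (Derive f z) <= M) -> 0 <= e1 ->
  (forall y z, k1 <= y <= k2 -> k1 <= z <= k2 -> Rabs (y - z) < eta ->
     Rabs (f y - f z - Derive f z * (y - z)) <= e1 * Rabs (y - z)) ->
  Rabs (x - x0) <= dl -> exp ((2 + M) * L) * Rabs (x - x0) < eta ->
  forall t, 0 <= t <= L ->
  (Vf x t - Vf x0 t - (x - x0) * du t) ^ 2
    <= (e1 * exp ((2 + M) * L) * Rabs (x - x0)) ^ 2 * exp ((2 + M) * L).
Proof.
  intros HM HMb He1 Htaylor Hxd HxC t Ht.
  assert (Hx0 : Rabs (x0 - x0) <= dl) by (rewrite Rminus_diag, Rabs_R0; lra).
  assert (Hlip := orbit_lipschitz_dependence M (Rlt_le _ _ HM) HMb x Hxd).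
  set (C := exp ((2 + M) * L)) in *.
  set (q := fun s => Derive f (Xf s x0)).
  set (R0 := fun s => f (Xf s x) - f (Xf s x0) - q s * (Xf s x - Xf s x0)).
  set (k := e1 * C * Rabs (x - x0)).
  assert (Hk : 0 <= k)
    by (apply Rmult_le_pos; [apply Rmult_le_pos; [lra | apply Rlt_le, exp_pos] | apply Rabs_pos]).
  assert (HR0 : forall s, 0 <= s <= L -> Rabs (R0 s) <= k).
  { intros s Hs. eapply Rle_trans; [apply Htaylor|].
    - apply HK; auto; lra.
    - apply HK; auto; lra.
    - eapply Rle_lt_trans; [apply Hlip, Hs | exact HxC].
    - unfold k. rewrite Rmult_assoc. apply Rmult_le_compat_l; [lra | apply Hlip, Hs]. }
  destruct (HX0 x Hxd) as [A1 A2]. destruct (HX0 x0 Hx0) as [B1 B2].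
  assert (H := energy_gronwall (fun s => Xf s x - Xf s x0 - (x - x0) * u s)
                 (fun s => Vf x s - Vf x0 s - (x - x0) * du s)
                 (fun s => - q s * (Xf s x - Xf s x0 - (x - x0) * u s) - R0 s)
                 M k L (Rlt_le _ _ HM) Hk).
  cbv beta in H. rewrite A1, A2, B1, B2, Hu0, Hdu0 in H.
  assert (0 <= (Xf t x - Xf t x0 - (x - x0) * u t) ^ 2) by apply pow2_ge_0.
  enough ((Xf t x - Xf t x0 - (x - x0) * u t) ^ 2 + (Vf x t - Vf x0 t - (x - x0) * du t) ^ 2
          <= k ^ 2 * C) by (unfold k in *; lra).
  eapply Rle_trans; [apply H; [| |exact Ht] |].
  - intros s _. split.
    + apply is_derive_Rminus; [apply is_derive_Rminus; apply HXd; auto |].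
      apply is_derive_scal, Hu.
    + eapply is_derive_eq.
      * apply is_derive_Rminus; [apply is_derive_Rminus; apply HXd; auto |].
        apply is_derive_scal, Hu.
      * unfold R0, q. ring.
  - intros s Hs. eapply Rle_trans; [apply Rabs_triang|]. rewrite Rabs_Ropp.
    apply Rplus_le_compat; [|apply HR0, Hs].
    rewrite Rabs_mult, Rabs_Ropp. apply Rmult_le_compat_r; [apply Rabs_pos|].
    apply HMb, HK; auto; lra.
  - replace ((x - x0 - (x - x0) * 1) ^ 2 + (0 - 0 - (x - x0) * 0) ^ 2 + k ^ 2) with (k ^ 2) by ring.
    apply Rmult_le_compat_l; [apply pow2_ge_0 | apply exp_le_exp_of_le; nra].
Qed.

Lemma velocity_dependence (eps : R) : 0 < eps -> exists rho, 0 < rho /\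
  forall x, Rabs (x - x0) < rho -> forall t, 0 <= t <= L ->
  Rabs (Vf x t - Vf x0 t - (x - x0) * du t) <= eps * Rabs (x - x0).
Proof.
  intros Heps.
  destruct (Derive_bounded_segment f k1 k2 Hcf) as [M [HM HMb]].
  set (C := exp ((2 + M) * L)).
  assert (HC : 1 <= C) by (assert (1 + (2 + M) * L <= C) by apply exp_ineq1_le; nra).
  set (e1 := eps / C ^ 2).
  assert (He1 : 0 < e1) by (apply Rdiv_lt_0_compat; [lra | apply pow_lt; lra]).
  destruct (uniform_taylor_segment f k1 k2 Hf Hcf e1 He1) as [eta [Heta Htaylor]].
  exists (Rmin dl (eta / C)). split; [apply Rmin_pos; [lra | apply Rdiv_lt_0_compat; lra]|].
  intros x Hx t Ht.
  assert (Hxd : Rabs (x - x0) <= dl) by (assert (Rmin dl (eta / C) <= dl) by apply Rmin_l; lra).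
  assert (HxC : C * Rabs (x - x0) < eta).
  { assert (Rmin dl (eta / C) <= eta / C) by apply Rmin_r.
    replace eta with (C * (eta / C)) by (field; lra).
    apply Rmult_lt_compat_l; lra. }
  assert (Hle := linearization_error M e1 eta x HM HMb (Rlt_le _ _ He1) Htaylor Hxd HxC t Ht).
  fold C in Hle.
  apply Rabs_le_of_sq_le; [apply Rmult_le_pos; [lra | apply Rabs_pos]|].
  eapply Rle_trans; [exact Hle|].
  unfold e1. rewrite !Rpow_mult_distr.
  replace ((eps / C ^ 2) ^ 2 * C ^ 2 * Rabs (x - x0) ^ 2 * C)
    with (eps ^ 2 * Rabs (x - x0) ^ 2 * / C) by (field; lra).
  assert (0 <= eps ^ 2 * Rabs (x - x0) ^ 2) by (apply Rmult_le_pos; apply pow2_ge_0).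
  assert (0 < / C <= 1)
    by (split; [apply Rinv_0_lt_compat; lra | rewrite <- Rinv_1; apply Rinv_le_contravar; lra]).
  nra.
Qed.

End Dependence.

Lemma Rabs_add_le_of_approximations (P D D0 B h eps : R) : 0 < h ->
  Rabs (0 - P - h * D) <= eps * h -> Rabs ((P - 0) / h - B) < eps -> Rabs (D - D0) < eps ->
  Rabs (D0 + B) <= 3 * eps.
Proof.
  intros Hh E1 E2 E3.
  assert (E2' : Rabs (P - h * B) <= eps * h).
  { replace (P - h * B) with (h * ((P - 0) / h - B)) by (field; lra).
    rewrite Rabs_mult, Rabs_pos_eq by lra. nra. }
  assert (E3' : Rabs (h * (D - D0)) <= eps * h) by (rewrite Rabs_mult, Rabs_pos_eq by lra; nra).
  assert (Hsum : Rabs (h * (D0 + B)) <= 3 * eps * h).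
  { replace (h * (D0 + B)) with (- (0 - P - h * D) - (P - h * B) - h * (D - D0)) by ring.
    eapply Rle_trans; [apply Rabs_triang|]. rewrite Rabs_Ropp.
    eapply Rle_trans; [apply Rplus_le_compat_r, Rabs_triang|].
    rewrite !Rabs_Ropp. lra. }
  rewrite Rabs_mult, Rabs_pos_eq in Hsum by lra.
  apply (Rmult_le_reg_r h); lra.
Qed.

(* Implicit differentiation of [phi x (T x) = 0]; [dphi] is the derivative of
   [phi] in its first variable, uniformly in the second. *)
Lemma derive_along_zero_curve (phi : R -> R -> R) (dphi T : R -> R) (x0 L a T' : R) :
  (exists d, 0 < d /\ forall x, Rabs (x - x0) < d -> phi x (T x) = 0 /\ 0 <= T x) ->
  T x0 + 1 <= L ->
  (forall eps, 0 < eps -> exists rho, 0 < rho /\ forall x, Rabs (x - x0) < rho ->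
     forall t, 0 <= t <= L ->
     Rabs (phi x t - phi x0 t - (x - x0) * dphi t) <= eps * Rabs (x - x0)) ->
  is_derive (phi x0) (T x0) a -> is_derive T x0 T' -> continuous dphi (T x0) ->
  dphi (T x0) = - T' * a.
Proof.
  intros [d [Hd Hcurve]] HL Hdep Ha HT' Hcd.
  assert (Hphi0 : phi x0 (T x0) = 0) by (apply Hcurve; rewrite Rminus_diag, Rabs_R0; lra).
  assert (Hcomp : derivable_pt_lim (fun x => phi x0 (T x)) x0 (T' * a))
    by (apply is_derive_Reals, (is_derive_Rcomp (phi x0) T); assumption).
  assert (HcT := is_derive_continuous T x0 T' HT').
  assert (HcdT : continuous (fun x => dphi (T x)) x0) by now apply continuous_comp.
  enough (dphi (T x0) + T' * a = 0) by lra.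
  apply eq_0_of_Rabs_le_eps. intros eps3 Heps3. set (eps := eps3 / 3).
  assert (Heps : 0 < eps) by (unfold eps; lra).
  destruct (Hdep eps Heps) as [rho [Hrho Hrho_est]].
  destruct (Hcomp eps Heps) as [[d2 Hd2] Hd2_est].
  destruct (continuous_eps_delta _ _ HcdT eps Heps) as [d3 [Hd3 Hd3_est]].
  destruct (continuous_eps_delta _ _ HcT 1 Rlt_0_1) as [d4 [Hd4 Hd4_est]].
  destruct (exists_pos_lt_all [d; rho; d2; d3; d4]) as [h [Hh Hlt]].
  { intros y Hy; repeat destruct Hy as [<-|Hy]; simpl in *; tauto. }
  assert (Hhd : forall y, In y [d; rho; d2; d3; d4] -> Rabs (x0 + h - x0) < y).
  { intros y Hy. replace (x0 + h - x0) with h by ring. rewrite Rabs_pos_eq by lra. now apply Hlt. }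
  destruct (Hcurve (x0 + h)) as [Hzero HTpos]; [apply Hhd; simpl; tauto|].
  assert (HTnear : 0 <= T (x0 + h) <= L).
  { assert (Hn := Hd4_est (x0 + h) (Hhd d4 ltac:(simpl; tauto))). apply Rabs_def2 in Hn. lra. }
  assert (E1 := Hrho_est (x0 + h) (Hhd rho ltac:(simpl; tauto)) _ HTnear).
  assert (Hh2 : Rabs h < d2) by (rewrite Rabs_pos_eq by lra; apply Hlt; simpl; tauto).
  assert (E2 := Hd2_est h (Rgt_not_eq _ _ Hh) Hh2).
  assert (E3 := Hd3_est (x0 + h) (Hhd d3 ltac:(simpl; tauto))).
  replace (x0 + h - x0) with h in E1 by ring.
  rewrite Hzero, (Rabs_pos_eq h) in E1 by lra. rewrite Hphi0 in E2.
  assert (H := Rabs_add_le_of_approximations _ _ _ _ h eps Hh E1 E2 E3).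
  unfold eps in H. lra.
Qed.

(** * The periodic orbits *)

Section PeriodicOrbits.

Variables (g : R -> R) (a b : Rbar).
Hypotheses (Ha0 : Rbar_lt a 0) (H0b : Rbar_lt 0 b).
Hypothesis Hg_C1 : forall x, in_interval a b x -> ex_derive g x /\ continuous (Derive g) x.
Hypothesis Hinc : forall x y, in_interval a b x -> in_interval a b y ->
  0 < x -> x < y -> potential g x < potential g y.
Hypothesis Hdec : forall x y, in_interval a b x -> in_interval a b y ->
  x < y -> y < 0 -> potential g y < potential g x.
Hypothesis Hh : forall x, in_interval a b x ->
  exists! y, in_interval a b y /\ potential g y = potential g x /\ sgn y = - sgn x.
Variables (X : R -> R -> R) (T : R -> R).
Hypothesis HX : forall y, in_interval a b y -> 0 < y -> solves_ivp g y (fun t => X t y).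
Hypothesis HT : forall y, in_interval a b y -> 0 < y -> is_min_period (fun t => X t y) (T y).

Lemma g_derive (z : R) : in_interval a b z -> is_derive g z (Derive g z).
Proof. intros Hz; apply Derive_correct, Hg_C1, Hz. Qed.

Lemma g_continuous (z : R) : in_interval a b z -> continuous g z.
Proof. intros Hz; apply (is_derive_continuous g z _ (g_derive z Hz)). Qed.

Lemma orbit_confined (x : R) : in_interval a b x -> 0 < x ->
  exists hx, in_interval a b hx /\ hx < 0 /\ potential g hx = potential g x /\
             forall t, hx <= X t x <= x.
Proof.
  intros Hx Hx0.
  destruct (negative_turning_point g a b Hh x Hx Hx0) as [hx [HhxJ [Hhx HV]]].
  exists hx. do 3 (split; [assumption|]).
  destruct (HT x Hx Hx0) as [HTx [Hper _]].
  apply (periodic_orbit_confined g a b Ha0 H0b g_continuous Hinc Hdec _ (T x));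
    auto.
Qed.

(* The largest amplitude [x0 + dl] controls the lowest turning point. *)
Lemma orbits_locally_confined (x0 : R) : in_interval a b x0 -> 0 < x0 ->
  exists dl k1 k2, 0 < dl /\
    (forall x, Rabs (x - x0) <= dl -> in_interval a b x /\ 0 < x) /\
    (forall z, k1 <= z <= k2 -> in_interval a b z) /\
    (forall x, Rabs (x - x0) <= dl -> forall t, k1 <= X t x <= k2).
Proof.
  intros Hx0J Hx0.
  destruct (in_interval_open a b x0 Hx0J) as [e [He HeJ]].
  set (dl := Rmin (e / 2) (x0 / 2)).
  assert (Hdl1 : dl <= e / 2) by apply Rmin_l.
  assert (Hdl2 : dl <= x0 / 2) by apply Rmin_r.
  assert (Hdl : 0 < dl) by (apply Rmin_pos; lra).
  assert (HxJ : forall x, Rabs (x - x0) <= dl -> in_interval a b x /\ 0 < x).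
  { intros x Hx. apply Rabs_le_between in Hx. split; [apply HeJ, Rabs_def1|]; lra. }
  set (xm := x0 + dl).
  assert (Hxm : Rabs (xm - x0) <= dl) by (unfold xm; rewrite Rabs_right; lra).
  destruct (HxJ xm Hxm) as [HxmJ Hxm0].
  destruct (orbit_confined xm HxmJ Hxm0) as [hm [HhmJ [Hhm [HVm _]]]].
  exists dl, hm, xm. split; [exact Hdl|]. split; [exact HxJ|].
  split; [intros z Hz; now apply (in_interval_convex a b hm xm)|].
  intros x Hx t. destruct (HxJ x Hx) as [HxJ' Hxp].
  destruct (orbit_confined x HxJ' Hxp) as [hx [HhxJ [Hhx [HVx Hconf]]]].
  specialize (Hconf t).
  assert (x <= xm) by (unfold xm; apply Rabs_le_between in Hx; lra).
  assert (hm <= hx).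
  { destruct (Rle_lt_dec hm hx) as [|Hlt]; [assumption|].
    assert (potential g hm < potential g hx) by (apply Hdec; auto).
    destruct (Req_dec x xm) as [E|E]; [subst x; lra|].
    assert (potential g x < potential g xm) by (apply Hinc; auto; lra). lra. }
  lra.
Qed.

Variables (x0 : R) (Hx0J : in_interval a b x0) (Hx0 : 0 < x0).

Let Xdot := fun t => Derive (fun s => X s x0) t.
Let q := fun t => Derive g (X t x0).

Lemma orbit_in_interval (t : R) : in_interval a b (X t x0).
Proof.
  destruct (orbit_confined x0 Hx0J Hx0) as [hx [HhxJ [_ [_ Hconf]]]].
  apply (in_interval_convex a b hx x0); auto.
Qed.

Lemma velocity_is_lin_sol : is_lin_sol q Xdot (fun t => - g (X t x0)).
Proof.
  destruct (solves_ivp_Derive g x0 _ (HX x0 Hx0J Hx0)) as [Hd _].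
  intros t. split; [apply (proj2 (Hd t))|].
  eapply is_derive_eq.
  - apply (is_derive_Ropp (fun s => g (X s x0))), (is_derive_Rcomp g (fun s => X s x0));
      [apply g_derive, orbit_in_interval | apply (proj1 (Hd t))].
  - unfold q, Xdot. ring.
Qed.

Lemma linearization_bounded : exists M, 0 < M /\ forall t, Rabs (q t) <= M.
Proof.
  destruct (orbit_confined x0 Hx0J Hx0) as [hx [HhxJ [_ [_ Hconf]]]].
  destruct (Derive_bounded_segment g hx x0) as [M [HM HMb]].
  { intros z Hz; apply Hg_C1, (in_interval_convex a b hx x0); auto. }
  exists M. split; [exact HM|]. intros t; apply HMb, Hconf.
Qed.

(* By uniqueness, an orbit at rest at a zero of [g] is an equilibrium, which has
   no minimal period. *)
Lemma orbit_never_at_rest (t1 : R) : Xdot t1 ^ 2 + g (X t1 x0) ^ 2 <> 0.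
Proof.
  intros H0.
  rewrite <- !Rsqr_pow2 in H0. apply Rplus_sqr_eq_0 in H0 as [Hv1 Hg1].
  destruct (orbit_confined x0 Hx0J Hx0) as [hx [HhxJ [_ [_ Hconf]]]].
  destruct (Derive_bounded_segment g hx x0) as [M [HM HMb]].
  { intros z Hz; apply Hg_C1, (in_interval_convex a b hx x0); auto. }
  assert (Hlip := lipschitz_segment g hx x0
    (fun z Hz => g_derive z (in_interval_convex a b hx x0 z HhxJ Hx0J Hz)) M HMb).
  destruct (solves_ivp_Derive g x0 _ (HX x0 Hx0J Hx0)) as [Hd _].
  apply (min_period_not_eventually_const _ (T x0) t1 (HT x0 Hx0J Hx0)).
  intros s Hs.
  enough (X (s + t1) x0 - X t1 x0 = 0) by lra.
  refine (proj1 (energy_gronwall_zero (fun s => X (s + t1) x0 - X t1 x0)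
    (fun s => Xdot (s + t1)) (fun s => - g (X (s + t1) x0)) M (Rlt_le _ _ HM) _ _ _ _ s Hs));
    cbv beta.
  - intros r _. split.
    + eapply is_derive_eq.
      * apply (is_derive_Rminus (fun s => X (s + t1) x0) (fun _ => X t1 x0));
          [apply (is_derive_shift (fun s => X s x0)), (proj1 (Hd (r + t1)))
          | apply is_derive_Rconst].
      * unfold Xdot. ring.
    + apply (is_derive_shift Xdot), (proj2 (Hd (r + t1))).
  - intros r _. rewrite Rabs_Ropp, <- (Rminus_0_r (g _)), <- Hg1.
    apply Hlip; apply Hconf.
  - rewrite Rplus_0_l; ring.
  - rewrite Rplus_0_l. exact Hv1.
Qed.

Lemma orbit_at_0 : X 0 x0 = x0.
Proof. exact (proj1 (proj2 (solves_ivp_Derive g x0 _ (HX x0 Hx0J Hx0)))). Qed.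

Lemma velocity_at_0 : Xdot 0 = 0.
Proof. exact (proj2 (proj2 (solves_ivp_Derive g x0 _ (HX x0 Hx0J Hx0)))). Qed.

Lemma velocity_periodic : periodic Xdot (T x0).
Proof.
  destruct (HT x0 Hx0J Hx0) as [_ [Hper _]].
  destruct (solves_ivp_Derive g x0 _ (HX x0 Hx0J Hx0)) as [Hd _].
  intros t. apply (periodic_Derive (fun s => X s x0)); [exact Hper|].
  intros s. eexists. apply (proj1 (Hd s)).
Qed.

Lemma orbit_returns : X (T x0) x0 = x0.
Proof.
  destruct (HT x0 Hx0J Hx0) as [_ [Hper _]].
  rewrite <- orbit_at_0 at 3.
  rewrite <- (Rplus_0_l (T x0)). apply Hper.
Qed.

Lemma g_x0_neq_0 : g x0 <> 0.
Proof.
  intros E. apply (orbit_never_at_rest 0).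
  rewrite velocity_at_0, orbit_at_0, E. ring.
Qed.

(* [u] is normalized through its Wronskian with the velocity. *)
Lemma linearization_second_solution :
  exists u du, is_lin_sol q u du /\ u 0 = 1 /\ du 0 = 0 /\ u (T x0) = 1.
Proof.
  destruct (solves_ivp_Derive g x0 _ (HX x0 Hx0J Hx0)) as [Hd _].
  destruct (second_solution q Xdot (fun t => g (X t x0)) (g x0)) as [u [du [Hu [HW Hdu0]]]].
  - intros t. apply (proj2 (Hd t)).
  - intros t. eapply is_derive_eq.
    + apply (is_derive_Rcomp g (fun s => X s x0));
        [apply g_derive, orbit_in_interval | apply (proj1 (Hd t))].
    + unfold q, Xdot. ring.
  - intros t. apply (continuous_comp (fun s => X s x0) (Derive g)).
    + apply (is_derive_continuous _ _ _ (proj1 (Hd t))).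
    + apply Hg_C1, orbit_in_interval.
  - exact orbit_never_at_rest.
  - exact velocity_at_0.
  - exists u, du. split; [exact Hu|].
    assert (Hgx0 := g_x0_neq_0).
    assert (HXdT : Xdot (T x0) = 0)
      by (rewrite <- velocity_at_0, <- (velocity_periodic 0), Rplus_0_l; reflexivity).
    assert (HW0 := HW 0). assert (HWT := HW (T x0)).
    rewrite velocity_at_0, orbit_at_0 in HW0. rewrite HXdT, orbit_returns in HWT.
    split; [|split; [exact Hdu0|]]; apply (Rmult_eq_reg_l (g x0)); auto; lra.
Qed.

Hypothesis HTder : ex_derive T x0.

(* Differentiate [Xdot(T x, x) = 0] in [x]. *)
Lemma monodromy_coefficient (u du : R -> R) :
  is_lin_sol q u du -> u 0 = 1 -> du 0 = 0 -> du (T x0) = Derive T x0 * g x0.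
Proof.
  intros Hu Hu0 Hdu0.
  destruct (orbits_locally_confined x0 Hx0J Hx0) as [dl [k1 [k2 [Hdl [HxJ [HkJ Hconf]]]]]].
  set (Vf := fun x t => Derive (fun s => X s x) t).
  assert (Hivp : forall x, Rabs (x - x0) <= dl ->
    (forall t, is_derive (fun s => X s x) t (Vf x t) /\ is_derive (Vf x) t (- g (X t x))) /\
    X 0 x = x /\ Vf x 0 = 0).
  { intros x Hx. destruct (HxJ x Hx). now apply solves_ivp_Derive, HX. }
  assert (Hx0d : Rabs (x0 - x0) <= dl) by (rewrite Rminus_diag, Rabs_R0; lra).
  destruct (Hivp x0 Hx0d) as [Hd0 _].
  assert (HT0 : 0 < T x0) by apply (HT x0 Hx0J Hx0).
  replace (Derive T x0 * g x0) with (- Derive T x0 * - g x0) by ring.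
  apply (derive_along_zero_curve Vf du T x0 (T x0 + 1)); [| lra | | | | ].
  - exists dl. split; [exact Hdl|]. intros x Hx.
    destruct (HxJ x (Rlt_le _ _ Hx)) as [HxJ' Hxp].
    destruct (HT x HxJ' Hxp) as [HTx [Hper _]].
    split; [|lra].
    rewrite <- (proj2 (proj2 (Hivp x (Rlt_le _ _ Hx)))), <- (Rplus_0_l (T x)).
    apply (periodic_Derive (fun s => X s x)); [exact Hper|].
    intros s. eexists. apply (proj1 (proj1 (Hivp x (Rlt_le _ _ Hx)) s)).
  - apply (velocity_dependence g k1 k2 X Vf x0 dl) with (u := u); auto; try lra.
    + intros z Hz. apply g_derive, HkJ, Hz.
    + intros z Hz. apply Hg_C1, HkJ, Hz.
    + intros x Hx. apply (Hivp x Hx).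
    + intros x Hx. apply (Hivp x Hx).
  - rewrite <- orbit_returns at 3. apply (proj2 (Hd0 (T x0))).
  - apply Derive_correct, HTder.
  - apply (is_derive_continuous du _ _ (proj2 (Hu (T x0)))).
Qed.

Lemma linearization_floquet :
  ((forall y, lin_sol q y -> periodic y (T x0)) \/
   (forall y, lin_sol q y -> (unbounded y <-> ~ (exists k, forall t, y t = k * Xdot t)))) /\
  ((forall y, lin_sol q y -> periodic y (T x0)) <-> Derive T x0 = 0).
Proof.
  destruct linearization_second_solution as [u [du [Hu [Hu0 [Hdu0 HuT]]]]].
  destruct linearization_bounded as [M [HM Hq]].
  assert (Hqper : periodic q (T x0))
    by (intros t; unfold q; now rewrite (proj1 (proj2 (HT x0 Hx0J Hx0)))).
  assert (HT0 : 0 < T x0) by apply (HT x0 Hx0J Hx0).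
  assert (Hgx0 := g_x0_neq_0).
  destruct (floquet_dichotomy q Xdot (fun t => - g (X t x0)) u du (T x0) M (Rlt_le _ _ HM) Hq
              Hqper velocity_is_lin_sol velocity_at_0) as [Hdich Hiff]; auto.
  - cbv beta. rewrite orbit_at_0. now apply Ropp_neq_0_compat.
  - exact velocity_periodic.
  - split; [exact Hdich|]. rewrite Hiff.
    cbv beta. rewrite orbit_at_0, (monodromy_coefficient u du Hu Hu0 Hdu0).
    replace (Derive T x0 * g x0 / - g x0) with (- Derive T x0) by (field; exact Hgx0).
    split; intros; lra.
Qed.

End PeriodicOrbits.

Theorem proposition3p2
  (g : R -> R) (a b : Rbar)
  (Ha0 : Rbar_lt a 0) (H0b : Rbar_lt 0 b)
  (Hg_C1 : forall x, in_interval a b x ->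
             ex_derive g x /\ continuous (Derive g) x)
  (Hg0 : g 0 = 0) (Hdg0 : Derive g 0 > 0)
  (Hinc : forall x y, in_interval a b x -> in_interval a b y ->
            0 < x -> x < y -> potential g x < potential g y)
  (Hdec : forall x y, in_interval a b x -> in_interval a b y ->
            x < y -> y < 0 -> potential g y < potential g x)
  (Hh : forall x, in_interval a b x ->
          exists! y, in_interval a b y /\ potential g y = potential g x /\
                     sgn y = - sgn x)
  (X : R -> R -> R)
  (HX : forall y, in_interval a b y -> 0 < y -> solves_ivp g y (fun t => X t y))
  (T : R -> R)
  (HT : forall y, in_interval a b y -> 0 < y -> is_min_period (fun t => X t y) (T y))
  (x0 : R) (Hx0J : in_interval a b x0) (Hx0 : 0 < x0)
  (HTder : ex_derive T x0) :
  let q := fun t => Derive g (X t x0) in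
  let Xdot := fun t => Derive (fun s => X s x0) t in
  ((forall y, lin_sol q y -> periodic y (T x0)) \/
   (forall y, lin_sol q y ->
      (unbounded y <-> ~ (exists c, forall t, y t = c * Xdot t)))) /\
  ((forall y, lin_sol q y -> periodic y (T x0)) <-> Derive T x0 = 0).
Proof.
  exact (linearization_floquet g a b Ha0 H0b Hg_C1 Hinc Hdec Hh X T HX HT x0 Hx0J Hx0 HTder).
Qed.
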